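(* Let $\boldsymbol{\Sigma}\in\mathbb{R}^{d\times d}$ be a symmetric positive semidefinite matrix with eigenvalues $\lambda_1^\star\ge\lambda_2^\star\ge\dots\ge\lambda_d^\star$ and corresponding orthonormal eigenvectors $\mathbf{u}_1^\star,\dots,\mathbf{u}_d^\star$, and assume $1=\lambda_1^\star>\lambda_2^\star>\cdots$. Let $k\in\{1,\dots,d-1\}$, let $\mathbf{v}_{1,\ell-1},\dots,\mathbf{v}_{k-1,\ell-1}\in\mathbb{R}^d$ be unit vectors, define $$\boldsymbol{\Sigma}_{k,\ell}=\boldsymbol{\Sigma}-\sum_{k'=1}^{k-1}\big(\mathbf{v}_{k',\ell-1}^\top\boldsymbol{\Sigma}\mathbf{v}_{k',\ell-1}\big)\mathbf{v}_{k',\ell-1}\mathbf{v}_{k',\ell-1}^\top,$$ and let $\mathbf{u}_{k,\ell}$ denote the (unit-norm) top eigenvector of $\boldsymbol{\Sigma}_{k,\ell}$. If for some $c_0>1$ $$\sum_{k'=1}^{k-1}\lambda_{k'}^\star\|\mathbf{u}_{k'}^\star-\mathbf{v}_{k',\ell-1}\|_2\le\frac{c_0-1}{4c_0}\big(\lambda_k^\star-\lambda_{k+1}^\star\big),$$ then $$\|\mathbf{u}_{k,\ell}-\mathbf{u}_k^\star\|_2\le\frac{4c_0}{\lambda_k^\star-\lambda_{k+1}^\star}\sum_{k'=1}^{k-1}\lambda_{k'}^\star\|\mathbf{u}_{k'}^\star-\mathbf{v}_{k',\ell-1}\|_2 .$$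
   Context: The vectors $\mathbf{v}_{k',\ell-1}$ play the role of the current estimates (from communication round $\ell-1$) of the first $k-1$ eigenvectors in a parallel deflation scheme; $\boldsymbol{\Sigma}_{k,\ell}$ is the corresponding deflated matrix. The top eigenvector of a symmetric matrix is a unit eigenvector for its largest eigenvalue. *)

From HB Require Import structures.
From mathcomp Require Import all_boot all_order all_algebra.
Set Implicit Arguments. Unset Strict Implicit. Unset Printing Implicit Defensive.
Import Order.TTheory GRing.Theory Num.Theory.
Local Open Scope ring_scope.

Definition norm2 {R : rcfType} {d : nat} (x : 'cV[R]_d) : R :=
  Num.sqrt (\sum_(i < d) x i 0 ^+ 2).

Definition qform {R : rcfType} {d : nat} (A : 'M[R]_d) (x : 'cV[R]_d) : R :=
  (x^T *m A *m x) 0 0.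

(* Deflated matrix Sigma_{k,l} = Sigma - sum_{k'<k} (v_k'^T Sigma v_k') v_k' v_k'^T
   (0-based indices k' = 0..k-1). *)
Definition deflate {R : rcfType} {d : nat} (S : 'M[R]_d) (v : nat -> 'cV[R]_d)
  (k : nat) : 'M[R]_d :=
  S - \sum_(k' < k) (qform S (v k') *: (v k' *m (v k')^T)).

Definition is_top_eigvec {R : rcfType} {d : nat} (A : 'M[R]_d) (u : 'cV[R]_d) : Prop :=
  norm2 u = 1 /\
  exists mu : R, A *m u = mu *: u /\
    (forall (mu' : R) (w : 'cV[R]_d), w != 0 -> A *m w = mu' *: w -> mu' <= mu).

(* The top eigenvalue mu of the deflated matrix A = deflate S v k is at least lam_k: the span of
   u*_0, ..., u*_k contains a nonzero z orthogonal to every v_j, on which A agrees with S, and mu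
   bounds the Rayleigh quotient of the symmetric matrix A (spectral theorem, applied over R[i]).
   With a_i = <u*_i, u> this reads
     lam_k <= sum_i lam_i a_i^2 - sum_(j<k) (v_j^T S v_j) <v_j, u>^2.
   As v_j is eps_j-close to u*_j, v_j^T S v_j >= lam_j (1 - eps_j^2) and |<v_j, u> - a_j| <= eps_j.
   With the gap G = lam_k - lam_(k+1) and E = sum_j lam_j eps_j <= G/4, this forces the mass
   s^2 = 1 - a_k^2 of u off u*_k to satisfy (G^2 - E^2) s^2 <= 2 G E s, hence s <= 32 E / (15 G).
   Finally |u - u*_k|^2 = 2 - 2 a_k <= 2 s^2 as a_k >= 0, and sqrt 2 * 32/15 < 4 <= 4 c0. *)

From HB Require Import structures.
From mathcomp Require Import all_boot all_order all_algebra.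
From mathcomp Require Import complex.
From mathcomp Require Import ring lra.
Set Implicit Arguments. Unset Strict Implicit. Unset Printing Implicit Defensive.
Import Order.TTheory GRing.Theory Num.Theory.
Local Open Scope ring_scope.

Definition ip {R : rcfType} {d : nat} (x y : 'cV[R]_d) : R := (x^T *m y) 0 0.

Section InnerProduct.
Variables (R : rcfType) (d : nat).
Implicit Types (x y z : 'cV[R]_d) (a : R).

Lemma ipE x y : ip x y = \sum_i x i 0 * y i 0.
Proof. by rewrite /ip mxE; apply: eq_bigr => i _; rewrite mxE. Qed.

Lemma ipC x y : ip x y = ip y x.
Proof. by rewrite !ipE; apply: eq_bigr => i _; rewrite mulrC. Qed.

Lemma ipBl x y z : ip (x - y) z = ip x z - ip y z.
Proof. by rewrite /ip linearB /= mulmxBl !mxE. Qed.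

Lemma ipZl a x z : ip (a *: x) z = a * ip x z.
Proof. by rewrite /ip linearZ /= -scalemxAl mxE. Qed.

Lemma ip_suml (I : Type) (r : seq I) (P : pred I) (F : I -> 'cV[R]_d) z :
  ip (\sum_(i <- r | P i) F i) z = \sum_(i <- r | P i) ip (F i) z.
Proof. by rewrite /ip linear_sum /= mulmx_suml summxE. Qed.

Lemma ipBr x y z : ip z (x - y) = ip z x - ip z y.
Proof. by rewrite !(ipC z) ipBl. Qed.

Lemma ipZr a x z : ip z (a *: x) = a * ip z x.
Proof. by rewrite !(ipC z) ipZl. Qed.

Lemma ip_sumr (I : Type) (r : seq I) (P : pred I) (F : I -> 'cV[R]_d) z :
  ip z (\sum_(i <- r | P i) F i) = \sum_(i <- r | P i) ip z (F i).
Proof. by rewrite ipC ip_suml; apply: eq_bigr => i _; rewrite ipC. Qed.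

Lemma ip0r x : ip x 0 = 0.
Proof. by rewrite /ip mulmx0 mxE. Qed.

Lemma ip_mulmxr (M : 'M[R]_d) x y : ip x (M *m y) = ip (M^T *m x) y.
Proof. by rewrite /ip trmx_mul trmxK mulmxA. Qed.

Lemma qformE (M : 'M[R]_d) x : qform M x = ip x (M *m x).
Proof. by rewrite /qform /ip mulmxA. Qed.

Lemma ip_ge0 x : 0 <= ip x x.
Proof. by rewrite ipE sumr_ge0 // => i _; rewrite -expr2 sqr_ge0. Qed.

Lemma ip_eq0 x : (ip x x == 0) = (x == 0).
Proof.
apply/idP/eqP => [|->]; last by rewrite ip0r.
rewrite ipE psumr_eq0 => [/allP x0|i _]; last by rewrite -expr2 sqr_ge0.
apply/matrixP => i j; rewrite ord1 mxE.
by have := x0 i (mem_index_enum i); rewrite mulf_eq0 orbb => /eqP.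
Qed.

Lemma ip_gt0 x : x != 0 -> 0 < ip x x.
Proof. by rewrite lt_def ip_ge0 ip_eq0 andbT. Qed.

Lemma norm2_sqr x : norm2 x ^+ 2 = ip x x.
Proof.
rewrite /norm2 sqr_sqrtr; last by rewrite sumr_ge0 // => i _; rewrite sqr_ge0.
by rewrite ipE; apply: eq_bigr => i _; rewrite expr2.
Qed.

Lemma norm2E x : norm2 x = Num.sqrt (ip x x).
Proof. by rewrite -norm2_sqr sqrtr_sqr ger0_norm // sqrtr_ge0. Qed.

Lemma ip_cauchy_schwarz x y : ip x y ^+ 2 <= ip x x * ip y y.
Proof.
have [->|y0] := eqVneq y 0; first by rewrite !ip0r expr0n mulr0.
have yy := ip_gt0 y0; set t := ip x y / ip y y.
have := ip_ge0 (x - t *: y).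
rewrite ipBl !ipBr !ipZl !ipZr (ipC y x) => h.
suff : 0 <= (ip y y)^-1 * (ip x x * ip y y - ip x y ^+ 2).
  by rewrite pmulr_rge0 ?invr_gt0 // subr_ge0.
suff -> : (ip y y)^-1 * (ip x x * ip y y - ip x y ^+ 2)
  = ip x x - t * ip x y - (t * ip x y - t * (t * ip y y)) by [].
by rewrite /t; field; rewrite gt_eqF.
Qed.

Lemma ip_sub_le_norm2 x y u : ip u u = 1 ->
  `|ip y u - ip x u| <= norm2 (x - y).
Proof.
move=> uu; rewrite norm2E -sqrtr_sqr ler_sqrt ?ip_ge0 //.
by rewrite -opprB -ipBl sqrrN; have := ip_cauchy_schwarz (x - y) u; rewrite uu mulr1.
Qed.

Lemma norm2_sub_unit x y : ip x x = 1 -> ip y y = 1 ->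
  norm2 (x - y) = Num.sqrt (2 - 2 * ip x y).
Proof.
by move=> xx yy; rewrite norm2E !ipBl !ipBr xx yy (ipC y x); congr Num.sqrt; ring.
Qed.

End InnerProduct.

Section HermitianMaxEigenvalue.
Local Open Scope sesquilinear_scope.
Local Open Scope complex_scope.
Variable R : rcfType.
Local Notation toC := (real_complex R).

Lemma ctmx_mul (m n p : nat) (X : 'M[R[i]]_(m, n)) (Y : 'M_(n, p)) :
  (X *m Y)^t* = Y^t* *m X^t*.
Proof. by rewrite trmx_mul map_mxM. Qed.

Lemma hermitian_max_eigenvalue n (A : 'M[R[i]]_n.+1) : A \is hermsymmx ->
  exists m : R, eigenvalue A m%:C /\
    forall y : 'rV_n.+1, (y *m A *m y^t*) 0 0 <= m%:C * (y *m y^t*) 0 0.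
Proof.
move=> Aherm; set P := spectralmx A; set D := spectral_diag A.
have Punit : P \is unitarymx := spectral_unitarymx A.
have PtP : P^t* *m P = 1%:M by apply/mulmx1C/unitarymxP.
have Adef : A = P^t* *m diag_mx D *m P.
  by rewrite -invmx_unitary //; apply/orthomx_spectralP/hermitian_normalmx.
have Dreal j : D 0 j = (complex.Re (D 0 j))%:C.
  by rewrite RRe_real //; apply/mxOverP/hermitian_spectral_diag_real.
pose j0 := Order.arg_max ord0 xpredT (fun j => complex.Re (D 0 j)).
exists (complex.Re (D 0 j0)); split.
  apply/eigenvalueP; exists ('e_j0 *m P).
    rewrite Adef !mulmxA -(mulmxA _ P) -invmx_unitary // mulmxV ?unitarymx_unit //.
    by rewrite mulmx1 -[_ *m diag_mx D]rowE row_diag_mx -scalemxAl -Dreal.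
  have Pfree : row_free P by rewrite row_free_unit unitarymx_unit.
  rewrite (mulmx_free_eq0 _ Pfree).
  by apply/eqP => /matrixP/(_ 0 j0)/eqP; rewrite !mxE !eqxx oner_eq0.
move=> y; pose z := y *m P^t*.
have -> : (y *m A *m y^t*) 0 0 = (z *m diag_mx D *m z^t*) 0 0.
  by rewrite Adef ctmx_mul trmxCK !mulmxA.
have -> : (y *m y^t*) 0 0 = (z *m z^t*) 0 0.
  by rewrite ctmx_mul trmxCK -mulmxA (mulmxA (P^t*)) PtP mul1mx.
clearbody z; rewrite mul_mx_diag !mxE mulr_sumr; apply: ler_sum => j _; rewrite !mxE.
rewrite mulrAC [leRHS]mulrC; apply: ler_wpM2l; first exact: mul_conjC_ge0.
by rewrite [D 0 j]Dreal lecR /j0; case: arg_maxP => // i _; apply.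
Qed.

Lemma symmetric_max_eigenvalue n (A : 'M[R]_n.+1) : A^T = A ->
  exists m, eigenvalue A m /\ forall x : 'cV_n.+1, qform A x <= m * ip x x.
Proof.
move=> Asym.
have toC_real a : toC a \is Num.real by apply/complex_realP; exists a.
have AC_herm : A ^ toC \is hermsymmx.
  apply: realsym_hermsym; last by apply/mxOverP => i j; rewrite mxE.
  by apply/is_hermitianmxP; rewrite expr0 scale1r map_mx_id // map_trmx Asym.
have [m [eig_m ray]] := hermitian_max_eigenvalue AC_herm.
exists m; split; first by rewrite -(eigenvalue_map toC).
move=> x; rewrite -lecR rmorphM.
have xC : (map_mx toC x^T)^t* = map_mx toC x.
  by apply/matrixP => i j; rewrite !mxE conj_Creal.
have /= := ray (map_mx toC x^T); rewrite xC.
have mapE (M : 'M[R]_1) : (M 0 0)%:C = (map_mx toC M) 0 0 by rewrite mxE.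
by rewrite qformE /ip !mapE !map_mxM -xC mulmxA.
Qed.

End HermitianMaxEigenvalue.

Lemma qform_le_max_eigenvalue (R : rcfType) n (A : 'M[R]_n) (mu : R) :
  A^T = A -> (forall mu' (w : 'cV_n), w != 0 -> A *m w = mu' *: w -> mu' <= mu) ->
  forall x, qform A x <= mu * ip x x.
Proof.
case: n A => [|n] A Asym mu_max x; first by rewrite (flatmx0 x) qformE mulmx0 !ip0r mulr0.
have [m [/eigenvalueP [w wA w0] ray]] := symmetric_max_eigenvalue Asym.
apply: le_trans (ray x) (ler_wpM2r (ip_ge0 x) (mu_max m w^T _ _)).
  by rewrite trmx_eq0.
by rewrite -{1}Asym -trmx_mul wA linearZ.
Qed.

Section OrthonormalBasis.
Variables (R : rcfType) (d : nat) (e : nat -> 'cV[R]_d).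
Hypothesis e_orthonormal :
  forall i j, (i < d)%N -> (j < d)%N -> ip (e i) (e j) = (i == j)%:R.

Lemma orthonormal_expansion x : x = \sum_(i < d) ip (e i) x *: e i.
Proof.
pose E : 'M[R]_d := \matrix_(r, c) e c r 0.
have EtE : E^T *m E = 1%:M.
  apply/matrixP => i j; rewrite !mxE -(e_orthonormal (ltn_ord i) (ltn_ord j)) ipE.
  by apply: eq_bigr => r _; rewrite !mxE.
transitivity (E *m (E^T *m x)); first by rewrite mulmxA (mulmx1C EtE) mul1mx.
apply/matrixP => r c; rewrite ord1 !mxE summxE.
apply: eq_bigr => i _; rewrite !mxE ipE mulrC; congr (_ * _).
by apply: eq_bigr => l _; rewrite !mxE.
Qed.

Lemma parseval x y : ip x y = \sum_(i < d) ip (e i) x * ip (e i) y.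
Proof.
by rewrite {1}(orthonormal_expansion x) ip_suml; apply: eq_bigr => i _; rewrite ipZl.
Qed.

Lemma ip_basis_comb m (c : 'I_m -> R) i : (m <= d)%N -> (i < d)%N ->
  ip (e i) (\sum_(l < m) c l *: e l) = \sum_(l < m) c l * (i == l)%:R.
Proof.
move=> le_md lt_id; rewrite ip_sumr; apply: eq_bigr => l _.
by rewrite ipZr e_orthonormal // (leq_trans (ltn_ord l)).
Qed.

Lemma exists_orthogonal_in_span k (v : nat -> 'cV[R]_d) : (k < d)%N ->
  exists2 z, z != 0 & (forall j, (j < k)%N -> ip (v j) z = 0) /\
                      (forall i, (k < i < d)%N -> ip (e i) z = 0).
Proof.
move=> lt_kd; pose M : 'M[R]_(k.+1, k) := \matrix_(i, j) ip (v j) (e i).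
pose b := nz_row (kermx M); pose z := \sum_(l < k.+1) b 0 l *: e l.
have b_neq0 : b != 0.
  rewrite nz_row_eq0 -mxrank_eq0 mxrank_ker subn_eq0 -ltnNge.
  exact: leq_trans (rank_leq_col M) _.
have bM : b *m M = 0 by apply/sub_kermxP; exact: nz_row_sub.
have ez := ip_basis_comb (b 0) lt_kd.
exists z; [|split].
- have [l bl] : exists l, b 0 l != 0.
    apply/existsP; apply: contraR b_neq0 => /existsPn b0.
    by apply/eqP/rowP => l; rewrite mxE; apply/eqP/negPn/b0.
  apply: contraNneq bl => z0.
  have := ez l (leq_trans (ltn_ord l) lt_kd); rewrite -/z z0 ip0r (bigD1 l) //= eqxx mulr1.
  rewrite big1 ?addr0 => [<- //|l' /negbTE neq_l'l].
  by rewrite eq_sym -[_ == _]/(l' == l) neq_l'l mulr0.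
- move=> j lt_jk; have /matrixP/(_ 0 (Ordinal lt_jk)) := bM; rewrite !mxE => bMj.
  rewrite ip_sumr -[RHS]bMj; apply: eq_bigr => l _.
  by rewrite ipZr /M mxE.
- move=> i /andP [lt_ki lt_id]; rewrite ez // big1 // => l _.
  by rewrite gtn_eqF ?mulr0 // (leq_trans (ltn_ord l)).
Qed.

End OrthonormalBasis.

Section Deflation.
Variables (R : rcfType) (d : nat) (S : 'M[R]_d) (v : nat -> 'cV[R]_d) (k : nat).

Lemma deflate_mulmx x :
  deflate S v k *m x = S *m x - \sum_(j < k) (qform S (v j) * ip (v j) x) *: v j.
Proof.
rewrite /deflate mulmxBl mulmx_suml; congr (_ - _); apply: eq_bigr => j _.
by rewrite -scalemxAl -mulmxA (mx11_scalar ((v j)^T *m x)) mul_mx_scalar scalerA.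
Qed.

Lemma trmx_deflate : S^T = S -> (deflate S v k)^T = deflate S v k.
Proof.
move=> S_sym; rewrite /deflate linearB /= linear_sum /= S_sym; congr (_ - _).
by apply: eq_bigr => j _; rewrite linearZ /= trmx_mul trmxK.
Qed.

Lemma qform_deflate x :
  qform (deflate S v k) x = qform S x - \sum_(j < k) qform S (v j) * ip (v j) x ^+ 2.
Proof.
rewrite !qformE deflate_mulmx ipBr ip_sumr; congr (_ - _); apply: eq_bigr => j _.
by rewrite ipZr (ipC x) -mulrA.
Qed.

End Deflation.

Section Eigenbasis.
Variables (R : rcfType) (d : nat) (S : 'M[R]_d) (lam : nat -> R) (e : nat -> 'cV[R]_d).
Hypothesis S_sym : S^T = S.
Hypothesis S_eig : forall i, (i < d)%N -> S *m e i = lam i *: e i.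
Hypothesis e_orthonormal :
  forall i j, (i < d)%N -> (j < d)%N -> ip (e i) (e j) = (i == j)%:R.

Lemma ip_eigvec_mulmx i x : (i < d)%N -> ip (e i) (S *m x) = lam i * ip (e i) x.
Proof. by move=> lt_id; rewrite ip_mulmxr S_sym S_eig // ipZl. Qed.

Lemma qform_eigen_expansion x : qform S x = \sum_(i < d) lam i * ip (e i) x ^+ 2.
Proof.
rewrite qformE (parseval e_orthonormal); apply: eq_bigr => i _.
by rewrite ip_eigvec_mulmx // mulrCA -expr2 ipC.
Qed.

Hypothesis lam_nonincr : forall i j, (i <= j < d)%N -> lam j <= lam i.

Lemma qform_ge_on_leading_span k z : (k < d)%N ->
  (forall i, (k < i < d)%N -> ip (e i) z = 0) -> lam k * ip z z <= qform S z.
Proof.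
move=> lt_kd z_lead; rewrite qform_eigen_expansion (parseval e_orthonormal) mulr_sumr.
apply: ler_sum => i _; rewrite -expr2; case: (leqP i k) => [le_ik|lt_ki].
  by rewrite ler_wpM2r ?sqr_ge0 // lam_nonincr // le_ik.
by rewrite z_lead ?lt_ki ?ltn_ord // expr2 !mulr0.
Qed.

Lemma deflate_top_eigenvalue_ge (v : nat -> 'cV[R]_d) k (mu : R) : (k < d)%N ->
  (forall mu' (w : 'cV_d), w != 0 -> deflate S v k *m w = mu' *: w -> mu' <= mu) ->
  lam k <= mu.
Proof.
move=> lt_kd mu_max.
have [z z_neq0 [z_perp z_lead]] := exists_orthogonal_in_span e_orthonormal v lt_kd.
have Az : deflate S v k *m z = S *m z.
  by rewrite deflate_mulmx big1 ?subr0 // => j _; rewrite z_perp // mulr0 scale0r.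
rewrite -(ler_pM2r (ip_gt0 z_neq0)).
apply: le_trans (qform_ge_on_leading_span lt_kd z_lead) _.
rewrite qformE -Az -qformE.
exact: qform_le_max_eigenvalue (trmx_deflate _ _ S_sym) mu_max z.
Qed.

Hypothesis S_psd : forall x, 0 <= qform S x.

Lemma eigenvalue_ge0 i : (i < d)%N -> 0 <= lam i.
Proof.
by move=> lt_id; have := S_psd (e i); rewrite qformE S_eig // ipZr e_orthonormal // eqxx mulr1.
Qed.

Lemma qform_ge_near_eigvec i w : (i < d)%N -> ip w w = 1 ->
  lam i * (1 - norm2 (e i - w) ^+ 2) <= qform S w.
Proof.
move=> lt_id ww; have := S_psd (w - e i).
rewrite !qformE mulmxBr S_eig // !ipBl !ipBr !ipZr ip_eigvec_mulmx // -qformE.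
rewrite norm2_sqr !ipBl !ipBr ww e_orthonormal // eqxx (ipC w (e i)).
move=> h; lra.
Qed.

End Eigenbasis.

Lemma nonincr_of_decr (R : numDomainType) d (f : nat -> R) :
  (forall i, (i.+1 < d)%N -> f i.+1 < f i) -> forall i j, (i <= j < d)%N -> f j <= f i.
Proof.
move=> f_decr i j /andP [+ lt_jd]; elim: j lt_jd => [|j IH] lt_jd.
  by rewrite leqn0 => /eqP ->.
rewrite leq_eqVlt => /predU1P [-> // | lt_ij].
exact: le_trans (ltW (f_decr j lt_jd)) (IH (ltnW lt_jd) lt_ij).
Qed.

Section ScalarBounds.
Variable R : rcfType.

(* (l, lk, a, g, q, e) stand for (lam_j, lam_k, <u*_j, u>, <v_j, u>, v_j^T S v_j, eps_j). *)
Lemma deflation_term_le (G E l lk a g q e : R) :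
  0 < G -> G <= lk -> lk <= l -> 0 <= e -> l * e <= E -> E <= G ->
  l * (1 - e ^+ 2) <= q -> `|g - a| <= e ->
  G * ((l - lk) * a ^+ 2 - q * g ^+ 2)
    <= (E ^+ 2 - G ^+ 2) * a ^+ 2 + 2 * G * (l * e) * `|a|.
Proof.
move=> G_gt0 G_le lk_le e_ge0 le_E E_le q_ge g_near.
have l_gt0 : 0 < l by apply: lt_le_trans G_gt0 (le_trans G_le lk_le).
have e_le1 : e <= 1.
  rewrite -(ler_pM2l G_gt0) mulr1 (le_trans _ (le_trans le_E E_le)) //.
  by rewrite ler_wpM2r // (le_trans G_le).
have p_ge0 : 0 <= l * (1 - e ^+ 2) by apply: mulr_ge0; [exact: ltW | nra].
have g2_ge : a ^+ 2 - 2 * `|a| * e <= g ^+ 2.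
  have aga : - (`|a| * e) <= a * (g - a).
    rewrite lerNnormlW // normrM ler_wpM2l //.
  have -> : g ^+ 2 = a ^+ 2 + 2 * (a * (g - a)) + (g - a) ^+ 2 by ring.
  by have := sqr_ge0 (g - a); lra.
have qg2 : l * (1 - e ^+ 2) * (a ^+ 2 - 2 * `|a| * e) <= q * g ^+ 2.
  apply: le_trans (ler_wpM2l p_ge0 g2_ge) _.
  by rewrite ler_wpM2r ?sqr_ge0.
have le2 : G * (l * e ^+ 2) <= E ^+ 2.
  have le_e2 : 0 <= l * e ^+ 2 by apply: mulr_ge0; [exact: ltW | exact: sqr_ge0].
  apply: le_trans (ler_wpM2r le_e2 (le_trans G_le lk_le)) _.
  have le_ge0 : 0 <= l * e by apply: mulr_ge0; [exact: ltW | exact: e_ge0].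
  have -> : l * (l * e ^+ 2) = (l * e) ^+ 2 by ring.
  by rewrite ler_sqr ?nnegrE // (le_trans le_ge0).
have Glk : G ^+ 2 <= G * lk by rewrite expr2 ler_pM2l.
have a2 := sqr_ge0 a.
have le3 : 0 <= l * e ^+ 3 * `|a|.
  by apply: mulr_ge0; [apply: mulr_ge0; [exact: ltW | exact: exprn_ge0] | exact: normr_ge0].
have step : (l - lk) * a ^+ 2 - q * g ^+ 2
    <= (l * e ^+ 2 - lk) * a ^+ 2 + 2 * (l * e) * `|a| by lra.
have := ler_wpM2l (ltW G_gt0) step.
have := ler_wpM2r a2 le2; have := ler_wpM2r a2 Glk; lra.
Qed.

Lemma sqrt_le_of_quadratic (s G E c0 : R) :
  0 <= s -> 0 < G -> 0 <= E -> 4 * E <= G -> 1 <= c0 ->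
  (G ^+ 2 - E ^+ 2) * s ^+ 2 <= 2 * G * E * s ->
  Num.sqrt (2 * s ^+ 2) <= 4 * c0 / G * E.
Proof.
move=> s_ge0 G_gt0 E_ge0 E_small c0_ge1 quad.
have Gs : 15 * (G * s) <= 32 * E.
  have [->|s_neq0] := eqVneq s 0; first by rewrite mulr0 mulr0 mulr_ge0.
  have s_gt0 : 0 < s by rewrite lt_def s_neq0.
  have lin : (G ^+ 2 - E ^+ 2) * s <= 2 * G * E.
    by rewrite -(ler_pM2r s_gt0); lra.
  have E2 : 16 * E ^+ 2 <= G ^+ 2.
    have -> : 16 * E ^+ 2 = (4 * E) ^+ 2 by ring.
    have E4_ge0 : 0 <= 4 * E by lra.
    by rewrite ler_sqr ?nnegrE // ltW.
  have E2s := ler_wpM2r (ltW s_gt0) E2.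
  by rewrite -(ler_pM2l G_gt0); lra.
have Gs_ge0 : 0 <= G * s by rewrite mulr_ge0 // ltW.
have rhs_ge0 : 0 <= 4 * c0 / G * E.
  by rewrite mulr_ge0 // divr_ge0 ?(ltW G_gt0) //; lra.
rewrite -(ger0_norm rhs_ge0) -sqrtr_sqr ler_sqrt ?sqr_ge0 //.
have -> : (4 * c0 / G * E) ^+ 2 = (4 * c0 * E) ^+ 2 / G ^+ 2.
  by rewrite mulrAC expr_div_n.
rewrite ler_pdivlMr ?exprn_gt0 //.
have sq_Gs : (15 * (G * s)) ^+ 2 <= (32 * E) ^+ 2.
  by rewrite ler_sqr ?nnegrE //; lra.
have sq_E : E ^+ 2 <= (c0 * E) ^+ 2.
  by rewrite ler_sqr ?nnegrE ?mulr_ge0 //; [rewrite ler_peMl | lra].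
have := sqr_ge0 E; lra.
Qed.

Lemma sum_split_at (d k : nat) (F : nat -> R) : (k < d)%N ->
  \sum_(i < d) F i = \sum_(i < k) F i + F k + \sum_(k.+1 <= i < d) F i.
Proof.
move=> lt_kd; rewrite -(big_mkord xpredT F) (big_cat_nat _ (ltnW lt_kd)) //=.
by rewrite big_mkord (big_ltn lt_kd) addrA.
Qed.

Section OffDiagonalMass.
Variables (d k : nat) (lam al q ga eps : nat -> R).
Local Notation gap := (lam k - lam k.+1).
Local Notation err := (\sum_(j < k) lam j * eps j).
Hypothesis lt_kd : (k.+1 < d)%N.
Hypothesis lam_nonincr : forall i j, (i <= j < d)%N -> lam j <= lam i.
Hypothesis lam_ge0 : 0 <= lam k.+1.
Hypothesis gap_gt0 : lam k.+1 < lam k.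
Hypothesis al_norm : \sum_(i < d) al i ^+ 2 = 1.
Hypothesis q_ge : forall j, (j < k)%N -> lam j * (1 - eps j ^+ 2) <= q j.
Hypothesis ga_near : forall j, (j < k)%N -> `|ga j - al j| <= eps j.
Hypothesis eps_ge0 : forall j, (j < k)%N -> 0 <= eps j.
Hypothesis rayleigh_ge :
  lam k <= \sum_(i < d) lam i * al i ^+ 2 - \sum_(j < k) q j * ga j ^+ 2.

Lemma lam_head j : (j < k)%N -> lam k <= lam j.
Proof. by move=> lt_jk; rewrite lam_nonincr // (ltnW lt_jk) (ltnW lt_kd). Qed.

Lemma lam_eps_ge0 j : (j < k)%N -> 0 <= lam j * eps j.
Proof.
move=> lt_jk; rewrite mulr_ge0 ?eps_ge0 //.
exact: le_trans (le_trans lam_ge0 (ltW gap_gt0)) (lam_head lt_jk).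
Qed.

Lemma err_ge0 : 0 <= err.
Proof. by apply: sumr_ge0 => j _; apply: lam_eps_ge0. Qed.

Lemma off_mass_bound : 4 * err <= gap ->
  (gap ^+ 2 - err ^+ 2) * (1 - al k ^+ 2) <= 2 * gap * err * Num.sqrt (1 - al k ^+ 2).
Proof.
move=> err_small; set G := gap in err_small *; set E := err in err_small *.
have lt_kd' : (k < d)%N := ltnW lt_kd.
have G_gt0 : 0 < G by rewrite subr_gt0.
have G_le : G <= lam k by rewrite gerDl oppr_le0.
have lam_eps_le j : (j < k)%N -> lam j * eps j <= E.
  move=> lt_jk; rewrite /E (bigD1 (Ordinal lt_jk)) //= lerDl.
  by apply: sumr_ge0 => i _; apply: lam_eps_ge0.
have E_ge0 : 0 <= E := err_ge0.
have E_le : E <= G by lra.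
pose P := \sum_(k.+1 <= i < d) al i ^+ 2; pose Q := \sum_(j < k) al j ^+ 2.
have P_ge0 : 0 <= P by apply: sumr_ge0 => i _; apply: sqr_ge0.
have Q_ge0 : 0 <= Q by apply: sumr_ge0 => i _; apply: sqr_ge0.
have mass : 1 - al k ^+ 2 = Q + P.
  by rewrite -al_norm (sum_split_at (fun i => al i ^+ 2) lt_kd') /Q /P; lra.
rewrite mass; set s := Num.sqrt (Q + P).
have al_le j : (j < k)%N -> `|al j| <= s.
  move=> lt_jk; rewrite -sqrtr_sqr ler_sqrt ?addr_ge0 //.
  have : al j ^+ 2 <= Q.
    by rewrite /Q (bigD1 (Ordinal lt_jk)) //= lerDl sumr_ge0 // => i _; apply: sqr_ge0.
  lra.
have excess : 0 <= \sum_(i < d) (lam i - lam k) * al i ^+ 2 - \sum_(j < k) q j * ga j ^+ 2.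
  have -> : \sum_(i < d) (lam i - lam k) * al i ^+ 2 = \sum_(i < d) lam i * al i ^+ 2 - lam k.
    rewrite -[X in _ - X]mulr1 -al_norm mulr_sumr -sumrB.
    by apply: eq_bigr => i _; rewrite mulrBl.
  by rewrite addrAC subr_ge0.
rewrite (sum_split_at (fun i => (lam i - lam k) * al i ^+ 2) lt_kd') /= subrr mul0r addr0 in excess.
have tail : \sum_(k.+1 <= i < d) (lam i - lam k) * al i ^+ 2 <= - (G * P).
  rewrite /P mulr_sumr -sumrN; apply: ler_sum_nat => i /andP [lt_ki lt_id].
  by rewrite -mulNr ler_wpM2r ?sqr_ge0 // /G opprB lerD2r lam_nonincr // lt_ki lt_id.
have head : G * \sum_(j < k) ((lam j - lam k) * al j ^+ 2 - q j * ga j ^+ 2)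
    <= (E ^+ 2 - G ^+ 2) * Q + 2 * G * E * s.
  apply: le_trans (_ : _ <= \sum_(j < k)
    ((E ^+ 2 - G ^+ 2) * al j ^+ 2 + 2 * G * (lam j * eps j) * s)) _.
    rewrite mulr_sumr; apply: ler_sum => -[j lt_jk] _ /=.
    apply: le_trans (deflation_term_le G_gt0 G_le (lam_head lt_jk) (eps_ge0 lt_jk)
      (lam_eps_le j lt_jk) E_le (q_ge lt_jk) (ga_near lt_jk)) _.
    rewrite lerD2l ler_wpM2l ?al_le // mulr_ge0 ?lam_eps_ge0 //.
    by rewrite mulr_ge0 ?ltW.
  by rewrite big_split /= -mulr_sumr -mulr_suml -mulr_sumr.
rewrite sumrB in head.
have := mulr_ge0 (ltW G_gt0) excess; have := ler_wpM2l (ltW G_gt0) tail.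
have := mulr_ge0 (sqr_ge0 E) P_ge0; lra.
Qed.

Lemma deflation_angle_bound (c0 : R) :
  1 < c0 -> err <= (c0 - 1) / (4 * c0) * gap -> 0 <= al k ->
  Num.sqrt (2 - 2 * al k) <= 4 * c0 / gap * err.
Proof.
move=> c0_gt1 err_le al_k_ge0.
have G_gt0 : 0 < gap by rewrite subr_gt0.
have err_small : 4 * err <= gap.
  have c0_gt0 : 0 < c0 by lra.
  have c0_split : (c0 - 1) / (4 * c0) = 4^-1 - (4 * c0)^-1.
    by field; rewrite gt_eqF.
  rewrite c0_split in err_le.
  have : 0 <= (4 * c0)^-1 * gap by rewrite mulr_ge0 ?invr_ge0 // ltW // mulr_gt0.
  lra.
have al_k_le1 : al k ^+ 2 <= 1.
  rewrite -al_norm (bigD1 (Ordinal (ltnW lt_kd))) //= lerDl.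
  by apply: sumr_ge0 => i _; apply: sqr_ge0.
have mass_ge0 : 0 <= 1 - al k ^+ 2 by rewrite subr_ge0.
have s_ge0 := sqrtr_ge0 (1 - al k ^+ 2).
apply: le_trans (sqrt_le_of_quadratic s_ge0 G_gt0 _ err_small (ltW c0_gt1) _).
- by rewrite ler_wsqrtr // sqr_sqrtr //; nra.
- exact: err_ge0.
- by rewrite sqr_sqrtr //; apply: off_mass_bound.
Qed.

End OffDiagonalMass.

End ScalarBounds.

(* Indices are 0-based: lam i, ustar i for i < d; paper's k corresponds to k.+1. *)
Theorem lemma2 (R : rcfType) (d : nat) (S : 'M[R]_d)
  (lam : nat -> R) (ustar : nat -> 'cV[R]_d)
  (HsymS : S^T = S)
  (HpsdS : forall x : 'cV[R]_d, 0 <= qform S x)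
  (Heig : forall i : nat, (i < d)%N -> S *m ustar i = lam i *: ustar i)
  (Horth : forall i j : nat, (i < d)%N -> (j < d)%N ->
     ((ustar i)^T *m ustar j) 0 0 = (i == j)%:R)
  (Hlam1 : lam 0%N = 1)
  (Hdec : forall i : nat, (i.+1 < d)%N -> lam i.+1 < lam i)
  (k : nat) (Hk : (k.+1 < d)%N)
  (v : nat -> 'cV[R]_d)
  (Hv : forall k' : nat, (k' < k)%N -> norm2 (v k') = 1)
  (u : 'cV[R]_d)
  (Hu : is_top_eigvec (deflate S v k) u)
  (Hsign : 0 <= ((u^T *m ustar k) 0 0))
  (c0 : R) (Hc0 : 1 < c0)
  (Herr : \sum_(k' < k) lam k' * norm2 (ustar k' - v k')
          <= (c0 - 1) / (4 * c0) * (lam k - lam k.+1)) :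
  norm2 (u - ustar k)
    <= 4 * c0 / (lam k - lam k.+1) * \sum_(k' < k) lam k' * norm2 (ustar k' - v k').
Proof.
case: Hu => u_unit [mu [Au mu_max]].
have unit_ip (w : 'cV[R]_d) : norm2 w = 1 -> ip w w = 1.
  by move=> w1; rewrite -norm2_sqr w1 expr1n.
have uu := unit_ip u u_unit.
have lam_nonincr := nonincr_of_decr Hdec.
have mu_ge : lam k <= mu.
  exact: (deflate_top_eigenvalue_ge HsymS Heig Horth lam_nonincr (ltnW Hk) mu_max).
have rayleigh_ge : lam k <= \sum_(i < d) lam i * ip (ustar i) u ^+ 2
    - \sum_(j < k) qform S (v j) * ip (v j) u ^+ 2.
  by rewrite -(qform_eigen_expansion HsymS Heig Horth) -qform_deflate qformE Au ipZr uu mulr1.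
have al_norm : \sum_(i < d) ip (ustar i) u ^+ 2 = 1.
  by rewrite -uu (parseval Horth); apply: eq_bigr => i _; rewrite expr2.
have ee : ip (ustar k) (ustar k) = 1 by rewrite /ip Horth ?eqxx // ltnW.
rewrite (norm2_sub_unit uu ee) ipC.
apply: (deflation_angle_bound (al := fun i => ip (ustar i) u)
  (q := fun j => qform S (v j)) (ga := fun j => ip (v j) u)
  (eps := fun j => norm2 (ustar j - v j)) Hk lam_nonincr
  _ (Hdec _ Hk) al_norm _ _ _ rayleigh_ge Hc0 Herr) => // [|j lt_jk|j lt_jk|j _|].
- exact: eigenvalue_ge0 Heig Horth HpsdS _ Hk.
- rewrite (qform_ge_near_eigvec HsymS Heig Horth HpsdS) ?unit_ip ?Hv //.
  exact: ltn_trans lt_jk (ltnW Hk).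
- exact: ip_sub_le_norm2.
- exact: sqrtr_ge0.
- by rewrite ipC.
Qed.
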